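(* Let $\mathbb{K}$ be a field, $m\ge 3$, $R=\mathbb{K}[T_1,\dots,T_m]$, and $I=\langle T_1^{a_1},\dots,T_m^{a_m},T_1^{b_1}\cdots T_m^{b_m}\rangle$ with $0\le b_i<a_i$ for all $i$, $b_i\ne0$ for at least two $i$, and additionally $|\mathbf{b}|=b_1+\cdots+b_m\le\min(a_1,\dots,a_m)$. Let $L\subset S=R[X_1,\dots,X_m,W]$ be the defining ideal of the Rees algebra of $I$. Then $\Gamma_0\cup\Gamma_3$, where $$\Gamma_0=\{\mathcal{P}(X_i,X_j)\mid 1\le j<i\le m+1\},\qquad \Gamma_3=\{\mathcal{P}(W^{|\mathbf{c}|},\mathbf{X}^{\mathbf{c}})\mid \mathbf{0}\ne\mathbf{c}\in\mathbb{N}^m,\ c_i\le b_i\text{ for all }i\},$$ is a (not necessarily reduced) Gröbner basis of $L$ with respect to $\tau$. In particular, $\operatorname{reltype}(I)\le|\mathbf{b}|$.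
   Context: Write $\mathbf{T}^{\mathbf{b}}=T_1^{b_1}\cdots T_m^{b_m}$. $L$ is the kernel of the $R$-algebra map $S\to R[Z]$, $X_i\mapsto T_i^{a_i}Z$, $W\mapsto\mathbf{T}^{\mathbf{b}}Z$; it is graded by total degree in $X_1,\dots,X_m,W$, $L=\bigoplus_{i\ge1}L_i$. Set $X_{m+1}:=W$; for $\mathbf{c}\in\mathbb{N}^m$, $\mathbf{X}^{\mathbf{c}}=\prod X_i^{c_i}$, $|\mathbf{c}|=\sum c_i$. Let $\Psi:S\to R$ be the $R$-algebra map $X_i\mapsto T_i^{a_i}$, $W\mapsto\mathbf{T}^{\mathbf{b}}$. For monomials $M,N$ in $X_1,\dots,X_m,W$, with $g=\gcd(\Psi(M),\Psi(N))$, set $\mathcal{P}(M,N)=\frac{\Psi(N)}{g}M-\frac{\Psi(M)}{g}N$. The order $\tau$ is lex on $S$ with $W>X_m>\cdots>X_1>T_1>\cdots>T_m$. The relation type is $\operatorname{reltype}(I)=\inf\{s\mid L=\langle L_1,\dots,L_s\rangle\}$. *)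

From HB Require Import structures.
From mathcomp Require Import all_boot all_order all_algebra.
From mathcomp Require Import mpoly.
Unset Printing Implicit Defensive.
Import Order.TTheory GRing.Theory Num.Theory.
Local Open Scope ring_scope.

(* S = K[T_1..T_m, X_1..X_m, W] is {mpoly K[Nv m]} with Nv m = 2m+1 variables:
   index i (0 <= i < m)      is T_{i+1},
   index m+i (0 <= i < m)    is X_{i+1},
   index 2m (= ord_max)      is W.
   R[Z] = K[T_1..T_m, Z] is {mpoly K[m.+1]}: index i < m is T_{i+1}, ord_max is Z.
   Exponent data a, b : nat -> nat; only the values at 0..m-1 (= a_1..a_m) matter. *)
Definition Nv (m : nat) : nat := (m + m).+1.

(* image of the j-th variable of S under S -> R[Z],
   T_i |-> T_i, X_i |-> T_i^{a_i} Z, W |-> T^b Z *)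
Definition phi_var (K : fieldType) (m : nat) (a b : nat -> nat) (j : 'I_(Nv m))
  : {mpoly K[m.+1]} :=
  if (j < m)%N then 'X_(inord j)
  else if (j < m + m)%N then 'X_(inord (j - m)) ^+ a (j - m)%N * 'X_ord_max
  else (\prod_(i < m) 'X_(inord i) ^+ b i) * 'X_ord_max.

Definition phi_tuple (K : fieldType) (m : nat) (a b : nat -> nat)
  : (Nv m).-tuple {mpoly K[m.+1]} :=
  [tuple phi_var K m a b j | j < Nv m].

(* L = kernel of the R-algebra map S -> R[Z] *)
Definition inL (K : fieldType) (m : nat) (a b : nat -> nat) (f : {mpoly K[Nv m]}) : Prop :=
  comp_mpoly (phi_tuple K m a b) f = 0.

(* Psi : S -> R on monomials: exponent vector (in the T-variables) of Psi(M) *)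
Definition psiE (m : nat) (a b : nat -> nat) (M : 'X_{1..Nv m}) : 'X_{1..Nv m} :=
  [multinom (if (i < m)%N then a i * M (inord (m + i)) + b i * M ord_max else 0)%N
   | i < Nv m].

(* P(M,N) = (Psi(N)/g) M - (Psi(M)/g) N, g = gcd(Psi M, Psi N) (componentwise min) *)
Definition Pcal (K : fieldType) (m : nat) (a b : nat -> nat) (M N : 'X_{1..Nv m})
  : {mpoly K[Nv m]} :=
  'X_[[multinom (M i + (psiE m a b N i - minn (psiE m a b M i) (psiE m a b N i)))%N | i < Nv m]]
  - 'X_[[multinom (N i + (psiE m a b M i - minn (psiE m a b M i) (psiE m a b N i)))%N | i < Nv m]].

(* the variable X_{k+1} (k < m), with X_{m+1} := W (k = m) *)
Definition XWvar (m : nat) (k : 'I_m.+1) : 'X_{1..Nv m} :=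
  [multinom (nat_of_bool (i == m + k :> nat)) | i < Nv m].

Definition Wpow (m : nat) (c : nat -> nat) : 'X_{1..Nv m} :=
  [multinom (if i == m + m :> nat then \sum_(j < m) c j else 0)%N | i < Nv m].
Definition Xpow (m : nat) (c : nat -> nat) : 'X_{1..Nv m} :=
  [multinom (if (m <= i < m + m)%N then c (i - m) else 0)%N | i < Nv m].

Definition Gamma0 (K : fieldType) (m : nat) (a b : nat -> nat) (g : {mpoly K[Nv m]}) : Prop :=
  exists (i j : 'I_m.+1), (j < i)%N /\ g = Pcal K m a b (XWvar m i) (XWvar m j).

Definition Gamma3 (K : fieldType) (m : nat) (a b : nat -> nat) (g : {mpoly K[Nv m]}) : Prop :=
  exists c : nat -> nat,
    (exists i, (i < m)%N /\ c i <> 0%N) /\ (forall i, (i < m)%N -> (c i <= b i)%N) /\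
    g = Pcal K m a b (Wpow m c) (Xpow m c).

(* the lex order tau: W > X_m > ... > X_1 > T_1 > ... > T_m *)
Fixpoint lex_lt (s t : seq nat) : bool :=
  match s, t with
  | x :: s', y :: t' => (x < y)%N || ((x == y) && lex_lt s' t')
  | _, _ => false
  end.

Definition tau_priority (m : nat) : seq nat :=
  [seq (m + m - k)%N | k <- iota 0 m.+1] ++ iota 0 m.

Definition tau_key (m : nat) (M : 'X_{1..Nv m}) : seq nat :=
  [seq M (inord j) | j <- tau_priority m].

Definition tau_lt (m : nat) (M N : 'X_{1..Nv m}) : bool :=
  lex_lt (tau_key m M) (tau_key m N).

Definition is_lm (K : fieldType) (n' : nat) (f : {mpoly K[Nv n']}) (M : 'X_{1..Nv n'}) : bool :=
  (M \in msupp f) && all (fun M' => (M' == M) || tau_lt n' M' M) (msupp f).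

Definition mdivides (n : nat) (M N : 'X_{1..n}) : Prop := forall i, (M i <= N i)%N.

Definition groebner_basis (K : fieldType) (m : nat)
  (G J : {mpoly K[Nv m]} -> Prop) : Prop :=
  (forall g, G g -> J g) /\
  (forall f, J f -> f != 0 -> exists g (Mg Mf : 'X_{1..Nv m}),
      [/\ G g, g != 0, is_lm K m g Mg, is_lm K m f Mf & mdivides (Nv m) Mg Mf]).

Definition degXW (m : nat) (M : 'X_{1..Nv m}) : nat :=
  (\sum_(i < Nv m | (m <= i)%N) M i)%N.

Definition homogXW (K : fieldType) (m : nat) (d : nat) (f : {mpoly K[Nv m]}) : bool :=
  all (fun M => degXW m M == d) (msupp f).

Definition generated_in_degrees (K : fieldType) (m : nat) (a b : nat -> nat) (s : nat) : Prop :=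
  forall f, inL K m a b f ->
    exists (k : nat) (h g : 'I_k -> {mpoly K[Nv m]}),
      (forall j, inL K m a b (g j) /\ exists d, [/\ (1 <= d)%N, (d <= s)%N & homogXW K m d (g j)]) /\
      f = \sum_(j < k) h j * g j.

From HB Require Import structures.
From mathcomp Require Import all_boot all_order all_algebra.
From mathcomp Require Import mpoly.
From mathcomp Require Import zify.

Set Implicit Arguments.
Unset Strict Implicit.
Import GRing.Theory.

(* L is the kernel of a monomial map, so it is spanned by the binomials X^u - X^v with
   phi(X^u) = phi(X^v), and it suffices to show that for v <_tau u some element of
   Gamma_0 \cup Gamma_3 has leading monomial dividing X^u.  Compare the exponents of
   W, X_m, ..., X_1.  If W agrees and X_i is the first variable whose exponent drops, the
   equations for the T-exponents force T_j^{a_j} | X^u for some j < i, the leading term of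
   P(X_i, X_j).  If the W-exponent drops by d, the same equations show that at least d
   factors X_j fit into T^{al} W^d, where T^{al} is the T-part of X^u; as a_j >= |b|, the
   number of factors fitting into T^{al} W^k grows by at most |b| per |b| steps in k, so
   already some k <= |b| works.  Writing k = |c| with c <= b gives an element
   P(W^|c|, X^c) of Gamma_3 whose leading monomial W^|c| T^{(ac - |c|b)_+} divides X^u,
   unless T_j^{a_j - b_j} W | X^u already.  Reducing X^u - X^v by such an element lowers a
   weighted (X, W)-degree, so the elements of Gamma_0 \cup Gamma_3, all of degree at most
   |b|, generate L. *)

Lemma sum_delta (n i : nat) (F : nat -> nat) :
  i < n -> \sum_(t < n) (t == i :> nat) * F t = F i.
Proof.
move=> lt_in; rewrite (bigD1 (Ordinal lt_in)) //= eqxx mul1n big1 ?addn0 // => t.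
by rewrite -val_eqE /= => /negbTE->.
Qed.

Lemma sum_gt0 (n i : nat) (F : nat -> nat) : i < n -> F i != 0 -> 0 < \sum_(t < n) F t.
Proof. by move=> lt_in Fi_neq0; rewrite (bigD1 (Ordinal lt_in)) //= addn_gt0 lt0n Fi_neq0. Qed.

Lemma exists_bounded_summands (n k : nat) (F : nat -> nat) :
  k <= \sum_(i < n) F i ->
  exists2 c : nat -> nat, (forall i, i < n -> c i <= F i) & \sum_(i < n) c i = k.
Proof.
elim: n k => [|n IHn] k.
  by rewrite big_ord0 leqn0 => /eqP->; exists (fun=> 0) => //; rewrite big1.
rewrite big_ord_recr /=; set s := \sum_(i < n) F i => le_k_sum.
have sumE (c : nat -> nat) x :
    \sum_(i < n.+1) (if i < n then c i else x) = \sum_(i < n) c i + x.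
  by rewrite big_ord_recr /= ltnn; congr (_ + _); apply: eq_bigr => i _; rewrite ltn_ord.
case: (leqP k s) => [/IHn [c le_cF <-]|lt_sk].
  exists (fun i => if i < n then c i else 0); last by rewrite sumE addn0.
  by move=> i _; case: ifP => // /le_cF.
exists (fun i => if i < n then F i else k - s); last by rewrite sumE; lia.
move=> i lt_i; case: ltnP => // le_ni; have -> : i = n by lia.
lia.
Qed.

Lemma subadditive_descent (B : nat) (F : nat -> nat) :
  0 < B -> (forall k, B < k -> F k <= F (k - B) + B) ->
  forall d, 0 < d -> d <= F d -> exists k, [/\ 0 < k, k <= B, k <= d & k <= F k].
Proof.
move=> B_gt0 F_step; elim/ltn_ind => d IHd d_gt0 le_d_Fd.
case: (leqP d B) => [le_dB|lt_Bd]; first by exists d.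
have [|||k [? ? ? ?]] := IHd (d - B); [lia | lia | have := F_step d lt_Bd; lia |].
by exists k; split=> //; lia.
Qed.

(* [al], [be], [w] are the T-, X- and W-exponents of a monomial X^u, the primed ones
   those of X^v; the two middle hypotheses say that phi(X^u) = phi(X^v). *)
Lemma W_drop_witness (n : nat) (a b al be al' be' : nat -> nat) (w w' : nat) :
  0 < \sum_(i < n) b i -> (forall i, i < n -> \sum_(j < n) b j <= a i) ->
  (forall i, i < n -> al i + a i * be i + b i * w = al' i + a i * be' i + b i * w') ->
  \sum_(i < n) be i + w = \sum_(i < n) be' i + w' -> w' < w ->
  (exists2 j, j < n & a j - b j <= al j) \/
  exists c : nat -> nat, [/\ exists2 i, i < n & c i != 0, forall i, i < n -> c i <= b i,
     \sum_(i < n) c i <= w & forall i, i < n -> a i * c i - (\sum_(j < n) c j) * b i <= al i].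
Proof.
set B := \sum_(i < n) b i => B_gt0 le_B_a eqT eqXW lt_w'w.
have a_gt0 i : i < n -> 0 < a i by move=> /le_B_a; lia.
case: (boolP [exists j : 'I_n, a j - b j <= al j]) => [/existsP [j ?]|/existsPn small_al].
  by left; exists j.
right.
(* [f k i] is the number of factors X_i that fit into T^al W^k. *)
pose f k i := (al i + k * b i) %/ a i.
pose F k := \sum_(i < n) f k i.
have le_d_Fd : w - w' <= F (w - w').
  have le_be' (i : 'I_n) : be' i <= be i + f (w - w') i.
    rewrite -leq_subLR leq_divRL ?a_gt0 //; have := eqT i (ltn_ord i); nia.
  have : \sum_(i < n) be' i <= \sum_(i < n) be i + F (w - w').
    by rewrite /F -big_split; apply: leq_sum => i _; apply: le_be'.
  lia.
have F_step k : B < k -> F k <= F (k - B) + B.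
  move=> lt_Bk; rewrite /F {2}/B -big_split /=; apply: leq_sum => i _.
  rewrite /f -(divnDMl _ _ (a_gt0 i (ltn_ord i))) leq_div2r //.
  have := le_B_a i (ltn_ord i); nia.
have w_gap : 0 < w - w' by rewrite subn_gt0.
have [k [k_gt0 le_kB le_kd le_kFk]] := subadditive_descent B_gt0 F_step w_gap le_d_Fd.
have le_fb (i : 'I_n) : f k i <= b i.
  rewrite /f -ltnS ltn_divLR ?a_gt0 //.
  have := small_al i; rewrite -ltnNge => lt_al.
  have := leq_mul (leq_trans le_kB (le_B_a i (ltn_ord i))) (leqnn (b i)); nia.
have [c le_cf sum_c] := exists_bounded_summands le_kFk.
exists c; split.
- case: (boolP [exists i : 'I_n, c i != 0]) => [/existsP [i ?]|/existsPn c0]; first by exists i.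
  by move: k_gt0; rewrite -sum_c big1 // => i _; apply/eqP/negPn/c0.
- by move=> i lt_in; apply: leq_trans (le_cf i lt_in) (le_fb (Ordinal lt_in)).
- lia.
- move=> i lt_in; rewrite sum_c; have := le_cf i lt_in; rewrite /f leq_divRL ?a_gt0 //; nia.
Qed.

Lemma X_drop_witness (n i : nat) (a al be al' be' : nat -> nat) :
  (forall j, j < n -> al j + a j * be j = al' j + a j * be' j) ->
  \sum_(j < n) be j = \sum_(j < n) be' j ->
  i < n -> be' i < be i -> (forall k, i < k < n -> be' k = be k) ->
  exists2 j, j < i & a j <= al j.
Proof.
move=> eqT eqX lt_in lt_be'_be eq_above.
case: (boolP [exists j : 'I_i, a j <= al j]) => [/existsP [j ?]|/existsPn big_a].
  by exists j.
have le_be' (j : 'I_n) : be' j <= be j.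
  case: (ltngtP i j) => [lt_ij|lt_ji|<-]; last exact: ltnW.
  - by rewrite eq_above ?lt_ij ?ltn_ord.
  - have := big_a (Ordinal lt_ji); rewrite -ltnNge /= => ?.
    have := eqT j (ltn_ord j); nia.
suff : \sum_(j < n) be' j < \sum_(j < n) be j by rewrite eqX ltnn.
rewrite (bigD1 (Ordinal lt_in)) //= [X in _ < X](bigD1 (Ordinal lt_in)) //= -addSn.
by apply: leq_add => //; apply: leq_sum => j _; apply: le_be'.
Qed.

Lemma lex_ltP (s t : seq nat) : lex_lt s t ->
  exists n, [/\ n < size s, n < size t,
     forall k, k < n -> nth 0 s k = nth 0 t k & nth 0 s n < nth 0 t n].
Proof.
elim: s t => [|x s IHs] [|y t] //= /orP[lt_xy|/andP[/eqP-> /IHs [n [? ? eq_below ?]]]].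
  by exists 0.
by exists n.+1; split=> // -[|k] //= /eq_below.
Qed.

Lemma lex_lt_intro (s t : seq nat) (n : nat) : n < size s -> n < size t ->
  (forall k, k < n -> nth 0 s k = nth 0 t k) -> nth 0 s n < nth 0 t n -> lex_lt s t.
Proof.
elim: s t n => [|x s IHs] [|y t] [|n] //= lt_ns lt_nt eq_below lt_n.
  by rewrite lt_n.
have /= -> := eq_below 0 isT; rewrite eqxx ltnn /=.
by apply: (IHs t n) => // k lt_kn; apply: (eq_below k.+1).
Qed.

Lemma lex_lt_irr (s : seq nat) : lex_lt s s = false.
Proof. by elim: s => //= x s ->; rewrite ltnn eqxx. Qed.

Lemma lex_lt_trans (s t r : seq nat) : lex_lt s t -> lex_lt t r -> lex_lt s r.
Proof.
elim: s t r => [|x s IHs] [|y t] [|z r] //=.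
move=> /orP[lt_xy|/andP[/eqP-> st]] /orP[lt_yz|/andP[/eqP<- tr]].
- by rewrite (ltn_trans lt_xy lt_yz).
- by rewrite lt_xy.
- by rewrite lt_yz.
- by rewrite eqxx (IHs t r st tr) orbT.
Qed.

Lemma lex_lt_total (s t : seq nat) : size s = size t -> s != t -> lex_lt s t || lex_lt t s.
Proof.
elim: s t => [|x s IHs] [|y t] //= [size_st]; rewrite eqseq_cons negb_and.
by case: (ltngtP x y) => //= _ /(IHs t size_st).
Qed.

Lemma exists_max_seq (T : eqType) (lt : rel T) (s : seq T) :
  (forall x y z, lt x y -> lt y z -> lt x z) -> (forall x y, x != y -> lt x y || lt y x) ->
  s != [::] -> exists2 x, x \in s & all (fun y => (y == x) || lt y x) s.
Proof.
move=> lt_trans lt_total; elim: s => [//|x [|y s] IHs] _.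
  by exists x; rewrite ?mem_head //= eqxx.
have [z z_in /allP z_max] := IHs isT.
case: (eqVneq x z) => [eq_xz|neq_xz].
  exists x; first exact: mem_head.
  by apply/allP => t; rewrite inE => /predU1P[->|/z_max]; rewrite ?eqxx ?eq_xz.
case/orP: (lt_total x z neq_xz) => [lt_xz|lt_zx].
  exists z; first by rewrite inE z_in orbT.
  by apply/allP => t; rewrite inE => /predU1P[->|/z_max //]; rewrite lt_xz orbT.
exists x; first exact: mem_head.
apply/allP => t; rewrite inE => /predU1P[->|/z_max /orP[/eqP->|lt_tz]]; first by rewrite eqxx.
  by rewrite lt_zx orbT.
by rewrite (lt_trans _ _ _ lt_tz lt_zx) orbT.
Qed.

(** * Ideals spanned by a set *)

Section IdealSpan.
Variable R : pzRingType.
Local Open Scope ring_scope.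

Inductive ideal_span (G : R -> Prop) : R -> Prop :=
  | ideal_span0 : ideal_span G 0
  | ideal_spanMD h g f : G g -> ideal_span G f -> ideal_span G (h * g + f).

Variable G : R -> Prop.

Lemma ideal_spanD f1 f2 : ideal_span G f1 -> ideal_span G f2 -> ideal_span G (f1 + f2).
Proof.
elim=> [|h g f Gg _ IHf] span_f2; first by rewrite add0r.
by rewrite -addrA; apply: ideal_spanMD => //; apply: IHf.
Qed.

Lemma ideal_spanMl p f : ideal_span G f -> ideal_span G (p * f).
Proof.
elim=> [|h g f' Gg _ IHf]; first by rewrite mulr0; apply: ideal_span0.
by rewrite mulrDr mulrA; apply: ideal_spanMD.
Qed.

Lemma ideal_span_trans (G' : R -> Prop) f :
  (forall g, G' g -> ideal_span G g) -> ideal_span G' f -> ideal_span G f.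
Proof.
move=> G'_span; elim=> [|h g f' G'g _ IHf]; first exact: ideal_span0.
by apply: ideal_spanD IHf; apply/ideal_spanMl/G'_span.
Qed.

Lemma ideal_span_sum f : ideal_span G f ->
  exists k (h g : 'I_k -> R), (forall j, G (g j)) /\ f = \sum_(j < k) h j * g j.
Proof.
elim=> [|h0 g0 f' Gg0 _ [k [h [g [Gg ->]]]]].
  by exists 0, (fun=> 0), (fun=> 0); split; [case | rewrite big_ord0].
exists k.+1, (fun j => if unlift ord0 j is Some j' then h j' else h0),
  (fun j => if unlift ord0 j is Some j' then g j' else g0).
split=> [j|]; first by case: (unlift ord0 j).
by rewrite big_ord_recl /= unlift_none; congr (_ + _); apply: eq_bigr => j _; rewrite liftK.
Qed.

End IdealSpan.

(** * The monomial map and the order tau *)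

Section ReesIdeal.
Variables (K : fieldType) (m : nat) (a b : nat -> nat).

Local Notation mon := 'X_{1..Nv m}.

(* Exponent of the [k]-th variable of S; junk (the exponent of T_1) when [k >= Nv m]. *)
Definition co (u : mon) (k : nat) : nat := u (inord k).

Definition Tfree (u : mon) : Prop := forall t, t < m -> co u t = 0.

Definition psiT (u : mon) (t : nat) : nat := a t * co u (m + t) + b t * co u (m + m).

Definition zdeg (u : mon) : nat := \sum_(t < m) co u (m + t) + co u (m + m).

Definition wdeg (u : mon) : nat := \sum_(t < m) t.+1 * co u (m + t) + m.+1 * co u (m + m).

Definition phiE (u : mon) : 'X_{1..m.+1} :=
  [multinom if i < m then co u i + psiT u i else zdeg u | i < m.+1].

Lemma co_val (u : mon) (i : 'I_(Nv m)) : co u i = u i.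
Proof. by rewrite /co inord_val. Qed.

Lemma coD (u v : mon) (k : nat) : co (u + v)%MM k = co u k + co v k.
Proof. by rewrite /co mnmDE. Qed.

Lemma coB (u v : mon) (k : nat) : co (u - v)%MM k = co u k - co v k.
Proof. by rewrite /co mnmBE. Qed.

Lemma co_inj (u v : mon) : (forall k, k < Nv m -> co u k = co v k) -> u = v.
Proof. by move=> eq_co; apply/mnmP => i; rewrite -!co_val eq_co. Qed.

Lemma Nv_ind (P : nat -> Prop) :
  (forall t, t < m -> P t) -> (forall t, t <= m -> P (m + t)) -> forall k, k < Nv m -> P k.
Proof.
move=> PT PXW k; rewrite /Nv ltnS => le_k_2m.
by case: (ltnP k m) => [/PT //|le_mk]; rewrite -(subnKC le_mk); apply: PXW; lia.
Qed.

Lemma big_Nv (F : nat -> nat) :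
  \sum_(j < Nv m) F j = \sum_(t < m) F t + \sum_(t < m) F (m + t) + F (m + m).
Proof. by rewrite /Nv big_ord_recr big_split_ord. Qed.

Lemma degXW_zdeg (u : mon) : degXW m u = zdeg u.
Proof.
rewrite /degXW big_mkcond /= (eq_bigr (fun i : 'I_(Nv m) => if m <= i then co u i else 0)).
  rewrite (big_Nv (fun i => if m <= i then co u i else 0)) big1 => [|t _]; last first.
    by rewrite leqNgt ltn_ord.
  by rewrite leq_addr add0n; under eq_bigr do rewrite leq_addr.
by move=> i _; rewrite co_val.
Qed.

Lemma wdeg_D (u v : mon) : wdeg (u + v)%MM = wdeg u + wdeg v.
Proof.
rewrite /wdeg coD (eq_bigr (fun t : 'I_m => t.+1 * co u (m + t) + t.+1 * co v (m + t))).
  by rewrite big_split /=; lia.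
by move=> t _; rewrite coD mulnDr.
Qed.

Lemma phiE_D (u v : mon) : phiE (u + v)%MM = (phiE u + phiE v)%MM.
Proof.
apply/mnmP => i; rewrite mnmDE !mnmE; case: ifP => _; first by rewrite /psiT !coD; lia.
rewrite /zdeg coD (eq_bigr (fun t : 'I_m => co u (m + t) + co v (m + t))) => [|t _].
  by rewrite big_split /=; lia.
exact: coD.
Qed.

Lemma phiE_eqP (u v : mon) :
  phiE u = phiE v <->
  (forall t, t < m -> co u t + psiT u t = co v t + psiT v t) /\ zdeg u = zdeg v.
Proof.
split=> [eq_phi|[eqT eqZ]]; last by apply/mnmP => i; rewrite !mnmE; case: ifP => // /eqT.
split=> [t lt_tm|].
  have := congr1 (fun w : 'X_{1..m.+1} => w (inord t)) eq_phi.
  by rewrite !mnmE inordK ?lt_tm //; lia.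
by have := congr1 (fun w : 'X_{1..m.+1} => w ord_max) eq_phi; rewrite !mnmE ltnn.
Qed.

(* Exponent of the [i]-th variable of R[Z] in the image of the [j]-th variable of S. *)
Definition phi_exp (j i : nat) : nat :=
  if i < m then
    if j < m then nat_of_bool (j == i) else if j < m + m then a i * (j - m == i) else b i
  else nat_of_bool (m <= j).

Lemma phi_varE (j : 'I_(Nv m)) : phi_var K m a b j = 'X_[[multinom phi_exp j i | i < m.+1]].
Proof.
have inordE (k : nat) (i : 'I_m.+1) : k <= m -> (inord k == i) = (k == i).
  by move=> le_km; rewrite -val_eqE /= inordK.
have ord_maxE (i : 'I_m.+1) : (ord_max == i) = ~~ (i < m).
  by rewrite -val_eqE /=; move: (ltn_ord i); case: ltngtP => // ? ?; lia.
rewrite /phi_var /phi_exp; case: ifP => [lt_jm|ge_jm]; last case: ifP => [lt_j2m|ge_j2m].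
- congr mpolyX; apply/mnmP => i; rewrite mnm1E mnmE inordE ?(ltnW lt_jm) //.
  by case: ltnP => // ?; rewrite leqNgt lt_jm; case: eqP => //; lia.
- rewrite mpolyXn -mpolyXD; congr mpolyX; apply/mnmP => i.
  rewrite mnmDE mulmnE !mnm1E mnmE ord_maxE inordE; last lia.
  case: ltnP => [lt_im|le_mi] /=.
    by case: eqP => [->|_]; rewrite ?mul1n ?muln1 ?mul0n ?muln0 ?addn0.
  by case: (j - m =P i) => [?|_]; [lia | rewrite leqNgt ge_jm].
- rewrite mprodXnE -mpolyXD; congr mpolyX; apply/mnmP => i.
  rewrite mnmDE mnm_sumE mnm1E mnmE ord_maxE.
  rewrite (eq_bigr (fun t : 'I_m => (t == i :> nat) * b t)) => [|t _]; last first.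
    by rewrite mulmnE mnm1E inordE 1?mulnC // ltnW.
  case: ltnP => [lt_im|le_mi] /=; first by rewrite sum_delta ?addn0.
  rewrite big1 => [|t _]; first by rewrite leqNgt ge_jm.
  by case: (t =P i :> nat) => [?|_]; [have := ltn_ord t; lia | rewrite mul0n].
Qed.

Lemma comp_phiX (u : mon) : comp_mpoly (phi_tuple K m a b) 'X_[u] = 'X_[phiE u].
Proof.
rewrite comp_mpolyX.
rewrite (eq_bigr (fun j : 'I_(Nv m) => 'X_[[multinom phi_exp j i | i < m.+1]] ^+ u j)%R).
  rewrite mprodXnE; congr mpolyX; apply/mnmP => i; rewrite mnm_sumE mnmE.
  rewrite (eq_bigr (fun j : 'I_(Nv m) => phi_exp j i * co u j)) => [|j _]; last first.
    by rewrite mulmnE mnmE co_val.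
  rewrite (big_Nv (fun j => phi_exp j i * co u j)) /phi_exp; case: ltnP => [lt_im|le_mi].
    rewrite [X in X + _ + _](eq_bigr (fun t : 'I_m => (t == i :> nat) * co u t)); last first.
      by move=> t _; rewrite ltn_ord.
    rewrite [X in _ + X + _](eq_bigr (fun t : 'I_m => (t == i :> nat) * (a i * co u (m + t)))).
      rewrite (sum_delta (co u)) // (sum_delta (fun t => a i * co u (m + t))) //.
      by rewrite ltnNge leq_addr /= ltnn /psiT; lia.
    by move=> t _; rewrite ltnNge leq_addr /= ltn_add2l ltn_ord addKn mulnAC mulnC.
  rewrite (eq_bigr (fun t : 'I_m => 0)) => [|t _]; last by rewrite leqNgt ltn_ord.
  rewrite big1 // add0n; under eq_bigr do rewrite leq_addr mul1n.
  by rewrite leq_addr mul1n.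
by move=> j _; rewrite tnth_mktuple phi_varE.
Qed.

Lemma size_tau_key (u : mon) : size (tau_key m u) = Nv m.
Proof. by rewrite size_map size_cat size_map !size_iota addSn. Qed.

Lemma nth_tau_key (u : mon) (k : nat) : k < Nv m ->
  nth 0 (tau_key m u) k = co u (if k <= m then m + m - k else k - m.+1).
Proof.
move=> lt_k; rewrite (nth_map 0) ?size_cat ?size_map ?size_iota ?addSn //.
rewrite nth_cat size_map size_iota ltnS; case: ifP => le_km.
  by rewrite (nth_map 0) ?size_iota ?ltnS // nth_iota ?ltnS.
by rewrite nth_iota //; move: lt_k; rewrite /Nv; lia.
Qed.

Lemma tau_lt_XW (u v : mon) (s : nat) : s <= m -> co v (m + s) < co u (m + s) ->
  (forall t, s < t <= m -> co v (m + t) = co u (m + t)) -> tau_lt m v u.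
Proof.
move=> le_sm lt_s eq_above; have lt_n : m - s < Nv m by rewrite /Nv; lia.
apply: (lex_lt_intro (n := m - s)); rewrite ?size_tau_key //.
  move=> k lt_k; have lt_k' : k < Nv m by rewrite /Nv; lia.
  have le_km : k <= m by lia.
  rewrite !nth_tau_key // le_km (_ : m + m - k = m + (m - k)); last lia.
  by apply: eq_above; lia.
by rewrite !nth_tau_key // leq_subr (_ : m + m - (m - s) = m + s) //; lia.
Qed.

Lemma tau_ltP (u v : mon) : tau_lt m v u ->
  (exists s, [/\ s <= m, co v (m + s) < co u (m + s)
                & forall t, s < t <= m -> co v (m + t) = co u (m + t)]) \/
  (forall t, t <= m -> co v (m + t) = co u (m + t)) /\ exists2 t, t < m & co v t < co u t.
Proof.
case/lex_ltP=> n [lt_n _ eq_below]; rewrite size_tau_key in lt_n.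
have eq_XW t : m - t < n -> t <= m -> co v (m + t) = co u (m + t).
  move=> lt_tn le_tm; have lt_t' : m - t < Nv m by rewrite /Nv; lia.
  have := eq_below _ lt_tn; rewrite !nth_tau_key // leq_subr.
  by rewrite (_ : m + m - (m - t) = m + t) //; lia.
rewrite !nth_tau_key //; case: ifP => [le_nm|gt_nm] lt_n_key.
  left; exists (m - n); split; [lia| |by move=> t le_t; apply: eq_XW; lia].
  by rewrite (_ : m + (m - n) = m + m - n) //; lia.
right; split=> [t le_tm|]; first by apply: eq_XW; lia.
by exists (n - m.+1) => //; move: lt_n; rewrite /Nv; lia.
Qed.

Lemma tau_lt_total (u v : mon) : u != v -> tau_lt m u v || tau_lt m v u.
Proof.
move=> ne_uv; apply: lex_lt_total; first by rewrite !size_tau_key.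
apply: contra ne_uv => /eqP eq_key; apply/eqP/co_inj; apply: Nv_ind => [t lt_tm|t le_tm].
  have lt_t' : t + m.+1 < Nv m by rewrite /Nv; lia.
  have gt_m : (t + m.+1 <= m) = false by apply/negbTE; rewrite -ltnNge; lia.
  by have := congr1 (nth 0 ^~ (t + m.+1)) eq_key; rewrite /= !nth_tau_key // gt_m addnK.
have lt_t' : m - t < Nv m by rewrite /Nv; lia.
have := congr1 (nth 0 ^~ (m - t)) eq_key.
by rewrite /= !nth_tau_key // leq_subr (_ : m + m - (m - t) = m + t) //; lia.
Qed.

(** * Reduction by Gamma_0 and Gamma_3 *)

Lemma co_psiE (u : mon) (k : nat) : k < Nv m ->
  co (psiE m a b u) k = if k < m then psiT u k else 0.
Proof.
move=> lt_k; rewrite /co mnmE inordK //; case: ifP => // _.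
by rewrite /psiT /co (_ : ord_max = inord (m + m)) //; apply: val_inj; rewrite /= inordK.
Qed.

(* The exponent of (Psi(N)/g) M in P(M, N): truncated subtraction of exponents divides
   Psi(N) by g = gcd(Psi(M), Psi(N)). *)
Definition Pterm (M N : mon) : mon := (M + (psiE m a b N - psiE m a b M))%MM.

Lemma PcalE (M N : mon) : Pcal K m a b M N = ('X_[Pterm M N] - 'X_[Pterm N M])%R.
Proof.
by congr (_ - _)%R; congr mpolyX; apply/mnmP => i; rewrite /Pterm mnmDE mnmBE !mnmE; lia.
Qed.

Lemma co_Pterm (M N : mon) (k : nat) : k < Nv m ->
  co (Pterm M N) k = co M k + (if k < m then psiT N k - psiT M k else 0).
Proof. by move=> lt_k; rewrite coD coB !co_psiE //; case: ifP. Qed.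

Lemma Pterm_XW (M N : mon) (t : nat) : t <= m -> co (Pterm M N) (m + t) = co M (m + t).
Proof. by move=> le_tm; rewrite co_Pterm ?ltnNge ?leq_addr ?addn0 // /Nv; lia. Qed.

Lemma psiT_Pterm (M N : mon) (t : nat) : t < m -> psiT (Pterm M N) t = psiT M t.
Proof. by move=> lt_tm; rewrite /psiT !Pterm_XW // ltnW. Qed.

Lemma zdeg_Pterm (M N : mon) : zdeg (Pterm M N) = zdeg M.
Proof.
by rewrite /zdeg Pterm_XW //; congr (_ + _); apply: eq_bigr => t _; rewrite Pterm_XW // ltnW.
Qed.

Lemma wdeg_Pterm (M N : mon) : wdeg (Pterm M N) = wdeg M.
Proof.
by rewrite /wdeg Pterm_XW //; congr (_ + _); apply: eq_bigr => t _; rewrite Pterm_XW // ltnW.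
Qed.

Lemma phiE_Pterm (M N : mon) : Tfree M -> Tfree N -> zdeg M = zdeg N ->
  phiE (Pterm M N) = phiE (Pterm N M).
Proof.
move=> TM TN eq_zdeg; apply/phiE_eqP; split; last by rewrite !zdeg_Pterm.
move=> t lt_tm; have lt_t : t < Nv m by rewrite /Nv; lia.
by rewrite !co_Pterm // lt_tm !psiT_Pterm // TM // TN //; lia.
Qed.

Lemma tau_lt_Pterm (M N : mon) : Tfree M -> Tfree N -> tau_lt m N M ->
  tau_lt m (Pterm N M) (Pterm M N).
Proof.
move=> TM TN /tau_ltP [[s [le_sm lt_s eq_above]]|[_ [t lt_tm]]]; last by rewrite TM ?TN.
apply: (tau_lt_XW le_sm); rewrite ?Pterm_XW // => t /andP[lt_st le_tm].
by rewrite !Pterm_XW //; apply: eq_above; rewrite lt_st.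
Qed.

Definition Gamma (g : {mpoly K[Nv m]}) : Prop := Gamma0 K m a b g \/ Gamma3 K m a b g.

(* The drop of [wdeg] is what makes repeated reduction terminate. *)
Record reducer (u M N : mon) : Prop := Reducer {
  reducer_Gamma : Gamma ('X_[M] - 'X_[N])%R;
  reducer_tau : tau_lt m N M;
  reducer_phiE : phiE M = phiE N;
  reducer_wdeg : wdeg N < wdeg M;
  reducer_div : mdivides (Nv m) M u }.

Lemma Pterm_reducer (u M N : mon) : Tfree M -> Tfree N -> zdeg M = zdeg N ->
  Gamma (Pcal K m a b M N) -> tau_lt m N M -> wdeg N < wdeg M ->
  (forall t, t < m -> psiT N t - psiT M t <= co u t) ->
  (forall t, t <= m -> co M (m + t) <= co u (m + t)) ->
  reducer u (Pterm M N) (Pterm N M).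
Proof.
move=> TM TN eq_zdeg GP lt_NM lt_wdeg divT divXW; split.
- by rewrite -PcalE.
- exact: tau_lt_Pterm.
- exact: phiE_Pterm.
- by rewrite !wdeg_Pterm.
move=> i; rewrite -!co_val.
apply: (Nv_ind (P := fun k => co (Pterm M N) k <= co u k)) (ltn_ord i) => [t lt_tm|t le_tm].
  by rewrite co_Pterm ?lt_tm ?TM ?divT // /Nv; lia.
by rewrite Pterm_XW ?divXW.
Qed.

Lemma co_XWvar (i : 'I_m.+1) (k : nat) : k < Nv m -> co (XWvar m i) k = (k == m + i).
Proof. by move=> lt_k; rewrite /co mnmE inordK. Qed.

Lemma XWvar_Tfree (i : 'I_m.+1) : Tfree (XWvar m i).
Proof. by move=> t lt_tm; rewrite co_XWvar ?(ltn_eqF (ltn_addr _ lt_tm)) // /Nv; lia. Qed.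

Lemma XWvar_XW (i : 'I_m.+1) (t : nat) : t <= m -> co (XWvar m i) (m + t) = (t == i).
Proof. by move=> le_tm; rewrite co_XWvar ?eqn_add2l // /Nv; lia. Qed.

Lemma sum_XWvar (i : 'I_m.+1) (F : nat -> nat) :
  \sum_(t < m) co (XWvar m i) (m + t) * F t + co (XWvar m i) (m + m) * F m = F i.
Proof.
rewrite XWvar_XW // (eq_bigr (fun t : 'I_m => (t == i :> nat) * F t)) => [|t _]; last first.
  by rewrite XWvar_XW // ltnW.
case: (ltnP i m) => [lt_im|le_mi]; first by rewrite sum_delta // (gtn_eqF lt_im) addn0.
have {le_mi}-> : i = m :> nat by have := ltn_ord i; lia.
by rewrite big1 ?eqxx ?mul1n // => t _; rewrite ltn_eqF.
Qed.

Lemma zdeg_XWvar (i : 'I_m.+1) : zdeg (XWvar m i) = 1.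
Proof. by rewrite -(sum_XWvar i (fun=> 1)) muln1; under [in RHS]eq_bigr do rewrite muln1. Qed.

Lemma wdeg_XWvar (i : 'I_m.+1) : wdeg (XWvar m i) = i.+1.
Proof. by rewrite -(sum_XWvar i succn) mulnC; under [in RHS]eq_bigr do rewrite mulnC. Qed.

Lemma psiT_XWvar (i : 'I_m.+1) (t : nat) :
  t < m -> psiT (XWvar m i) t = a t * (t == i) + b t * (m == i).
Proof. by move=> lt_tm; rewrite /psiT !XWvar_XW // ltnW. Qed.

Lemma Gamma0_reducer (u : mon) (i j : 'I_m.+1) : j < i ->
  a j - psiT (XWvar m i) j <= co u j -> 0 < co u (m + i) ->
  reducer u (Pterm (XWvar m i) (XWvar m j)) (Pterm (XWvar m j) (XWvar m i)).
Proof.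
move=> lt_ji divT divX; have lt_jm : j < m by have := ltn_ord i; lia.
apply: Pterm_reducer; rewrite ?zdeg_XWvar ?wdeg_XWvar //; try exact: XWvar_Tfree.
- by left; exists i, j.
- apply: (tau_lt_XW (s := i)); rewrite ?XWvar_XW ?eqxx ?(gtn_eqF lt_ji) -1?ltnS //.
  move=> t /andP[lt_it le_tm].
  by rewrite !XWvar_XW // (gtn_eqF lt_it) (gtn_eqF (ltn_trans lt_ji lt_it)).
- move=> t lt_tm; rewrite !psiT_XWvar // (gtn_eqF lt_jm) muln0 addn0.
  case: (t =P j :> nat) => [->|_]; last by rewrite muln0.
  by move: divT; rewrite psiT_XWvar // (ltn_eqF lt_ji) muln1.
by move=> t le_tm; rewrite XWvar_XW //; case: eqP => // ->.
Qed.

Lemma co_Wpow (c : nat -> nat) (k : nat) : k < Nv m ->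
  co (Wpow m c) k = if k == m + m then \sum_(j < m) c j else 0.
Proof. by move=> lt_k; rewrite /co mnmE inordK. Qed.

Lemma co_Xpow (c : nat -> nat) (k : nat) : k < Nv m ->
  co (Xpow m c) k = if m <= k < m + m then c (k - m) else 0.
Proof. by move=> lt_k; rewrite /co mnmE inordK. Qed.

Section Gamma3Monomials.
Variable c : nat -> nat.
Local Notation C := (\sum_(j < m) c j).

Lemma Wpow_Tfree : Tfree (Wpow m c).
Proof. by move=> t lt_tm; rewrite co_Wpow ?ifF //; [apply/eqP|rewrite /Nv]; lia. Qed.

Lemma Xpow_Tfree : Tfree (Xpow m c).
Proof.
move=> t lt_tm; rewrite co_Xpow ?ifF //; last by rewrite /Nv; lia.
by apply/negbTE; rewrite negb_and -ltnNge lt_tm.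
Qed.

Lemma Wpow_X (t : nat) : t < m -> co (Wpow m c) (m + t) = 0.
Proof. by move=> lt_tm; rewrite co_Wpow ?ifF //; [apply/eqP|rewrite /Nv]; lia. Qed.

Lemma Wpow_W : co (Wpow m c) (m + m) = C.
Proof. by rewrite co_Wpow ?eqxx. Qed.

Lemma Xpow_X (t : nat) : t < m -> co (Xpow m c) (m + t) = c t.
Proof. by move=> lt_tm; rewrite co_Xpow ?leq_addr ?ltn_add2l ?lt_tm ?addKn // /Nv; lia. Qed.

Lemma Xpow_W : co (Xpow m c) (m + m) = 0.
Proof. by rewrite co_Xpow ?ltnn ?andbF. Qed.

Lemma zdeg_Wpow : zdeg (Wpow m c) = C.
Proof. by rewrite /zdeg Wpow_W big1 // => t _; rewrite Wpow_X. Qed.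

Lemma zdeg_Xpow : zdeg (Xpow m c) = C.
Proof. by rewrite /zdeg Xpow_W addn0; apply: eq_bigr => t _; rewrite Xpow_X. Qed.

Lemma Gamma3_reducer (u : mon) :
  (exists2 i, i < m & c i != 0) -> (forall i, i < m -> c i <= b i) ->
  C <= co u (m + m) -> (forall t, t < m -> a t * c t - C * b t <= co u t) ->
  reducer u (Pterm (Wpow m c) (Xpow m c)) (Pterm (Xpow m c) (Wpow m c)).
Proof.
move=> [i lt_im ci_neq0] le_cb divW divT.
have C_gt0 : 0 < C := sum_gt0 lt_im ci_neq0.
apply: Pterm_reducer; rewrite ?zdeg_Wpow ?zdeg_Xpow //.
- exact: Wpow_Tfree.
- exact: Xpow_Tfree.
- by right; exists c; split=> //; exists i; split=> //; apply/eqP.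
- by apply: (tau_lt_XW (s := m)); rewrite ?Wpow_W ?Xpow_W // => t; lia.
- have no_X : \sum_(t < m) t.+1 * co (Wpow m c) (m + t) = 0.
    by rewrite big1 // => t _; rewrite Wpow_X ?muln0.
  rewrite /wdeg Wpow_W Xpow_W no_X muln0 addn0 add0n.
  apply: (@leq_ltn_trans (m * C)); last by rewrite ltn_pmul2r.
  by rewrite big_distrr /=; apply: leq_sum => t _; rewrite Xpow_X // leq_mul2r ltn_ord orbT.
- move=> t lt_tm; rewrite /psiT Xpow_X ?Xpow_W ?Wpow_W ?Wpow_X // !muln0 !addn0 add0n.
  by rewrite [b t * _]mulnC divT.
move=> t le_tm; case: (ltnP t m) => [/Wpow_X-> //|le_mt].
by rewrite (_ : t = m) ?Wpow_W //; lia.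
Qed.

End Gamma3Monomials.

Hypothesis b_gt0 : 0 < \sum_(j < m) b j.
Hypothesis b_le_a : forall i, i < m -> \sum_(j < m) b j <= a i.

Lemma exists_reducer (u v : mon) :
  phiE u = phiE v -> tau_lt m v u -> exists M N, reducer u M N.
Proof.
case/phiE_eqP=> eqT eq_zdeg /tau_ltP [[s [le_sm lt_s eq_above]]|[eq_XW [t lt_tm]]]; last first.
  by have := eqT t lt_tm; rewrite /psiT !eq_XW ?(ltnW lt_tm) //; lia.
case: (ltnP s m) => [lt_sm|le_ms].
  have eqW : co v (m + m) = co u (m + m) by apply: eq_above; rewrite lt_sm leqnn.
  have eqT' j : j < m -> co u j + a j * co u (m + j) = co v j + a j * co v (m + j).
    by move=> lt_jm; have := eqT j lt_jm; rewrite /psiT eqW; lia.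
  have eqX : \sum_(t < m) co u (m + t) = \sum_(t < m) co v (m + t).
    by apply: (@addIn (co u (m + m))); rewrite -{2}eqW.
  have eq_above' k : s < k < m -> co v (m + k) = co u (m + k).
    by case/andP=> lt_sk lt_km; apply: eq_above; rewrite lt_sk ltnW.
  have [j lt_js le_aj] := X_drop_witness eqT' eqX lt_sm lt_s eq_above'.
  exists (Pterm (XWvar m (inord s)) (XWvar m (inord j))),
         (Pterm (XWvar m (inord j)) (XWvar m (inord s))).
  by apply: Gamma0_reducer; rewrite ?inordK ?psiT_XWvar //; lia.
have eq_sm : s = m by apply/eqP; rewrite eqn_leq le_sm.
subst s.
have eqT' i : i < m -> co u i + a i * co u (m + i) + b i * co u (m + m)
                       = co v i + a i * co v (m + i) + b i * co v (m + m).
  by move=> lt_im; have := eqT i lt_im; rewrite /psiT; lia.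
case: (W_drop_witness (be := fun t => co u (m + t)) (be' := fun t => co v (m + t))
         b_gt0 b_le_a eqT' eq_zdeg lt_s) => [[j lt_jm le_aj]|[c [c_neq0 le_cb le_cW le_cT]]].
- exists (Pterm (XWvar m ord_max) (XWvar m (inord j))),
         (Pterm (XWvar m (inord j)) (XWvar m ord_max)).
  by apply: Gamma0_reducer; rewrite ?inordK ?psiT_XWvar //=; lia.
- exists (Pterm (Wpow m c) (Xpow m c)), (Pterm (Xpow m c) (Wpow m c)).
  exact: Gamma3_reducer.
Qed.

(** * Generation of L *)

Local Open Scope ring_scope.

Lemma binomial_inL (u v : mon) : phiE u = phiE v -> inL K m a b ('X_[u] - 'X_[v]).
Proof. by move=> eq_phi; rewrite /inL comp_mpolyB !comp_phiX eq_phi subrr. Qed.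

Lemma inL_fiber (f : {mpoly K[Nv m]}) (u : mon) : inL K m a b f -> u \in msupp f ->
  exists2 v, v \in msupp f & (v != u) && (phiE v == phiE u).
Proof.
move=> fL u_in; apply/hasP; apply/negPn/negP => /hasPn no_v.
have := congr1 (mcoeff (phiE u)) fL; rewrite comp_mpolyEX mcoeff0 raddf_sum /=.
rewrite (bigD1_seq u u_in (msupp_uniq f)) /= mcoeffZ comp_phiX mcoeffX eqxx mulr1.
rewrite big1 ?addr0 => [fu0|v ne_vu]; first by move: u_in; rewrite mcoeff_msupp fu0 eqxx.
rewrite mcoeffZ comp_phiX mcoeffX; case: (boolP (v \in msupp f)) => [v_in|/memN_msupp_eq0->].
  by have := no_v v v_in; rewrite ne_vu /= => /negbTE->; rewrite mulr0.
by rewrite mul0r.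
Qed.

Lemma Gamma_Pcal (g : {mpoly K[Nv m]}) : Gamma g -> exists M N,
  [/\ g = Pcal K m a b M N, Tfree M, Tfree N, zdeg M = zdeg N
    & (0 < zdeg M <= maxn 1 (\sum_(j < m) b j))%N].
Proof.
case=> [[i [j [_ ->]]]|[c [[i [lt_im ci_neq0]] [le_cb ->]]]].
  exists (XWvar m i), (XWvar m j); rewrite !zdeg_XWvar leq_maxl.
  by split=> //; apply: XWvar_Tfree.
exists (Wpow m c), (Xpow m c); rewrite zdeg_Wpow zdeg_Xpow.
split=> //; [exact: Wpow_Tfree | exact: Xpow_Tfree |].
rewrite (sum_gt0 lt_im) ?(leq_trans _ (leq_maxr _ _)) //; last exact/eqP.
by apply: leq_sum => t _; apply: le_cb.
Qed.

Lemma Gamma_inL (g : {mpoly K[Nv m]}) : Gamma g -> inL K m a b g.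
Proof.
case/Gamma_Pcal=> [M [N [-> TM TN eq_zdeg _]]].
by rewrite PcalE; apply/binomial_inL/phiE_Pterm.
Qed.

Lemma Gamma_homog (g : {mpoly K[Nv m]}) : Gamma g ->
  exists d, [/\ (1 <= d)%N, (d <= \sum_(j < m) b j)%N & homogXW K m d g].
Proof.
case/Gamma_Pcal=> [M [N [-> _ _ eq_zdeg /andP[zdeg_gt0 le_zdeg]]]].
exists (zdeg M); split=> //; first by rewrite (maxn_idPr b_gt0) in le_zdeg.
rewrite /homogXW PcalE; apply/allP => x /msuppB_le; rewrite mem_cat !msuppX !inE.
by case/orP=> /eqP->; rewrite degXW_zdeg zdeg_Pterm ?eq_zdeg.
Qed.

Lemma reducer_lm (u M N : mon) : reducer u M N ->
  ('X_[M] - 'X_[N] != 0 :> {mpoly K[Nv m]}) && is_lm K m ('X_[M] - 'X_[N]) M.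
Proof.
case=> _ lt_NM _ _ _; have ne_NM : (N == M) = false.
  by apply: contraTF lt_NM => /eqP->; rewrite /tau_lt lex_lt_irr.
have M_in : M \in msupp ('X_[M] - 'X_[N] : {mpoly K[Nv m]}).
  by rewrite mcoeff_msupp mcoeffB !mcoeffX eqxx ne_NM subr0 oner_eq0.
rewrite /is_lm M_in /=; apply/andP; split.
  by apply: contraTneq M_in => ->; rewrite msupp0.
apply/allP => x /msuppB_le; rewrite mem_cat !msuppX !inE => /orP[->//|/eqP->].
by rewrite lt_NM orbT.
Qed.

Lemma exists_lm (f : {mpoly K[Nv m]}) : f != 0 -> exists u, is_lm K m f u.
Proof.
rewrite -msupp_eq0 => supp_neq0.
have lt_trans (x y z : mon) : tau_lt m x y -> tau_lt m y z -> tau_lt m x z.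
  exact: lex_lt_trans.
have [u u_in u_max] := exists_max_seq lt_trans (@tau_lt_total) supp_neq0.
by exists u; apply/andP.
Qed.

Lemma lm_reducer (f : {mpoly K[Nv m]}) (u : mon) :
  inL K m a b f -> is_lm K m f u -> exists M N, reducer u M N.
Proof.
move=> fL /andP[u_in /allP u_max].
have [v v_in /andP[ne_vu /eqP eq_phi]] := inL_fiber fL u_in.
apply: (exists_reducer (esym eq_phi)).
by have /orP[/eqP/eqP|//] := u_max v v_in; rewrite (negbTE ne_vu).
Qed.

Definition toric_binomial (g : {mpoly K[Nv m]}) : Prop :=
  exists u v, phiE u = phiE v /\ g = 'X_[u] - 'X_[v].

Lemma inL_toric_span (f : {mpoly K[Nv m]}) : inL K m a b f -> ideal_span toric_binomial f.
Proof.
move: {2}(size (msupp f)) (leqnn (size (msupp f))) => n; elim: n f => [|n IHn] f le_size fL.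
  by move: le_size; rewrite leqn0 size_eq0 msupp_eq0 => /eqP->; apply: ideal_span0.
case supp_f: (msupp f) => [|u s].
  by move/eqP: supp_f; rewrite msupp_eq0 => /eqP->; apply: ideal_span0.
have u_in : u \in msupp f by rewrite supp_f mem_head.
have [v v_in /andP[ne_vu /eqP eq_phi]] := inL_fiber fL u_in.
set f' := f - f@_u *: ('X_[u] - 'X_[v]).
have -> : f = (f@_u)%:MP * ('X_[u] - 'X_[v]) + f' by rewrite mul_mpolyC addrC subrK.
apply: ideal_spanMD; first by exists u, v; rewrite eq_phi.
apply: IHn; last first.
  move: fL; rewrite /inL /f' comp_mpolyB comp_mpolyZ comp_mpolyB !comp_phiX eq_phi.
  by rewrite subrr scaler0 subr0.
have supp_f' : {subset msupp f' <= rem u (msupp f)}.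
  move=> x; rewrite (mem_rem_uniq _ (msupp_uniq f)) inE !mcoeff_msupp.
  rewrite /f' mcoeffB mcoeffZ mcoeffB !mcoeffX.
  have [<-|ne_ux] := eqVneq u x.
    by rewrite (negbTE ne_vu) /= subr0 mulr1n mulr1 subrr eqxx.
  have [<- _|ne_vx] := eqVneq v x; first by rewrite -mcoeff_msupp v_in.
  by rewrite subrr mulr0 subr0.
have := uniq_leq_size (msupp_uniq f') supp_f'; rewrite size_rem // supp_f /= in le_size *.
by move=> /leq_trans; apply.
Qed.

Lemma toric_Gamma_span (u v : mon) : phiE u = phiE v -> ideal_span Gamma ('X_[u] - 'X_[v]).
Proof.
move: {2}(wdeg u + wdeg v).+1 (ltnSn (wdeg u + wdeg v)) => n.
elim: n u v => [//|n IHn] u v lt_n eq_phi.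
have [<-|ne_uv] := eqVneq u v; first by rewrite subrr; apply: ideal_span0.
wlog lt_vu : u v lt_n eq_phi ne_uv / tau_lt m v u.
  move=> main; case/orP: (tau_lt_total ne_uv) => [lt_uv|]; last exact: main.
  rewrite -opprB -mulN1r; apply/ideal_spanMl/main; rewrite 1?addnC 1?eq_sym //.
have [M [N [GMN _ eq_phiMN lt_wdeg M_div_u]]] := exists_reducer eq_phi lt_vu.
have le_Mu : (M <= u)%MM by apply/mnm_lepP.
have -> : 'X_[u] - 'X_[v] = 'X_[u - M] * ('X_[M] - 'X_[N]) + ('X_[u - M + N] - 'X_[v])
    :> {mpoly K[Nv m]}.
  by rewrite mulrBr -!mpolyXD submK // addrA subrK.
apply: ideal_spanMD => //; apply: IHn.
  by move: lt_n; rewrite !wdeg_D -{1}(submK le_Mu) wdeg_D; lia.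
by rewrite phiE_D -eq_phiMN -phiE_D submK.
Qed.

Lemma inL_Gamma_span (f : {mpoly K[Nv m]}) : inL K m a b f -> ideal_span Gamma f.
Proof.
move/inL_toric_span; apply: ideal_span_trans => _ [u [v [eq_phi ->]]].
exact: toric_Gamma_span.
Qed.

End ReesIdeal.

Local Open Scope ring_scope.

Theorem theorem4p1 (K : fieldType) (m : nat) (a b : nat -> nat)
  (hm : (3 <= m)%N)
  (hba : forall i, (i < m)%N -> (b i < a i)%N)
  (hb2 : exists i j, [/\ (i < m)%N, (j < m)%N, i <> j, b i <> 0%N & b j <> 0%N])
  (hbmin : forall i, (i < m)%N -> (\sum_(j < m) b j <= a i)%N) :
  groebner_basis K m (fun g => Gamma0 K m a b g \/ Gamma3 K m a b g) (inL K m a b) /\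
  (exists s, (s <= \sum_(j < m) b j)%N /\ generated_in_degrees K m a b s).
Proof.
have b_gt0 : (0 < \sum_(j < m) b j)%N.
  by case: hb2 => i [j [lt_im _ _ bi_neq0 _]]; apply: (sum_gt0 lt_im); apply/eqP.
split.
  split=> [g|f fL f_neq0]; first exact: Gamma_inL.
  have [u u_lm] := exists_lm f_neq0.
  have [M [N red]] := lm_reducer b_gt0 hbmin fL u_lm.
  have /andP[g_neq0 g_lm] := reducer_lm red.
  by exists ('X_[M] - 'X_[N]), M, u; split=> //; case: red.
exists (\sum_(j < m) b j); split=> // f /(inL_Gamma_span b_gt0 hbmin) /ideal_span_sum.
case=> k [h [g [Gg ->]]]; exists k, h, g; split=> // j.
by split; [apply: Gamma_inL | apply: Gamma_homog].
Qed.
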